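(* For every homeomorphism $f:[0,1]\to[0,1]$ we have $h(\langle f\rangle,[0,1])=+\infty$, where $\langle f\rangle=\{f^n:n\in\mathbb{Z}\}$.
   Context: For a subgroup $G$ of the group of homeomorphisms of a space $A$ (acting by $gx=g(x)$), a nonempty subset $Y\subseteq A$ is invariant if $g(y)\in Y$ for all $g\in G$, $y\in Y$. The height of $(G,A)$ is $h(G,A)=\sup\{n\geq 0:$ there exist distinct closed invariant subsets $Y_0\subset Y_1\subset\cdots\subset Y_n=A\}$ (possibly $+\infty$). *)

From HB Require Import structures.
From mathcomp Require Import all_boot all_order all_algebra.
From mathcomp Require Import all_classical all_reals all_analysis.
Set Implicit Arguments. Unset Strict Implicit. Unset Printing Implicit Defensive.
Import Order.TTheory GRing.Theory Num.Theory.
Import numFieldNormedType.Exports.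
Local Open Scope classical_set_scope.
Local Open Scope ring_scope.

Definition I01 (R : realType) : set R := `[0%R, 1%R]%classic.
Arguments I01 R : clear implicits.

(* f : [0,1] -> [0,1] is a homeomorphism with inverse g (both given as maps
   R -> R, only their values on [0,1] matter). *)
Definition homeo_pair (R : realType) (f g : R -> R) : Prop :=
  (forall x, I01 R x -> I01 R (f x)) /\
  (forall x, I01 R x -> I01 R (g x)) /\
  (forall x, I01 R x -> g (f x) = x) /\
  (forall x, I01 R x -> f (g x) = x) /\
  {within I01 R, continuous f} /\ {within I01 R, continuous g}.

(* Y is invariant under the cyclic group <f> = {f^n : n in Z}, where
   f^n = iter n f for n >= 0 and f^(-n) = iter n g (g = f^{-1}). *)
Definition cyc_invariant (R : realType) (f g : R -> R) (Y : set R) : Prop :=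
  forall (n : nat) (y : R), Y y -> Y (iter n f y) /\ Y (iter n g y).

Definition closed_inv (R : realType) (f g : R -> R) (Y : set R) : Prop :=
  [/\ Y !=set0, Y `<=` I01 R, closed (Y : set (subspace (I01 R)))
    & cyc_invariant f g Y].

Definition has_chain (R : realType) (f g : R -> R) (n : nat) : Prop :=
  exists Y : nat -> set R,
    [/\ (forall i, (i <= n)%N -> closed_inv f g (Y i)),
        (forall i, (i < n)%N -> Y i `<` Y i.+1) & Y n = I01 R].

(* h(<f>, [0,1]) = +oo: the set of lengths n admitting such a chain is
   unbounded. *)
Definition height_infinite (R : realType) (f g : R -> R) : Prop :=
  forall N : nat, exists n : nat, (N <= n)%N /\ has_chain f g n.

From mathcomp Require Import all_boot all_order all_algebra.
From mathcomp Require Import all_classical all_reals all_analysis.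
From mathcomp Require Import lra.
Set Implicit Arguments. Unset Strict Implicit. Unset Printing Implicit Defensive.
Import Order.TTheory GRing.Theory Num.Theory.
Import numFieldNormedType.Exports.
Local Open Scope classical_set_scope.
Local Open Scope ring_scope.

(* Suppose an open interval (u, v) inside [0, 1] meets every <f>-orbit in at
   most one point.  Choose x_0 < x_1 < ... in (u, v) and let Y_k be the closure
   of the union of the orbits of x_0, ..., x_k: these are closed invariant sets,
   and x_(k+1) is not in Y_k because its neighbourhood (x_k, v) contains no
   orbit point other than the x_i, so Y_0 < Y_1 < ... < Y_(N-1) < [0, 1] is a
   chain of every length N.
   Such an interval exists.  If f is increasing, take (0, 1) when f = id, and
   otherwise the fundamental domain (a, f a) of a point with a < f a (or the one
   of f^-1 if f a < a).  If f is decreasing, it has a fixed point c and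
   exchanges the two sides of c; the increasing map f o f preserves [0, c], and
   an interval in [0, c] that works for f o f also works for f, because the odd
   iterates land on the other side of c. *)

Definition orbit (R : realType) (f g : R -> R) (y : R) : set R :=
  [set z | exists m, z = iter m f y \/ z = iter m g y].

Definition meets_orbits_once (R : realType) (f g : R -> R) (u v : R) : Prop :=
  forall y m, u < y < v ->
    (u < iter m f y < v -> iter m f y = y) /\
    (u < iter m g y < v -> iter m g y = y).

Lemma meets_orbits_onceC (R : realType) (f g : R -> R) (u v : R) :
  meets_orbits_once f g u v -> meets_orbits_once g f u v.
Proof. by move=> once y m /(once _ m) []. Qed.

Section ClosedInvariantSets.
Variables (R : realType) (f g : R -> R).

Lemma cyc_invariant_stable (Y : set R) :
  (forall z, Y z -> Y (f z) /\ Y (g z)) -> cyc_invariant f g Y.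
Proof.
move=> fgY n y Yy; elim: n => [//|n [fnY gnY]].
by split; [exact: (fgY _ fnY).1 | exact: (fgY _ gnY).2].
Qed.

Lemma closure_sub_I01 (S : set R) : S `<=` I01 R -> closure S `<=` I01 R.
Proof.
move=> SI; apply: subset_trans (closureS SI) _; exact: interval_closed.
Qed.

Lemma closure_stable (h : R -> R) (S : set R) :
  {within I01 R, continuous h} -> S `<=` I01 R ->
  (forall z, S z -> S (h z)) -> forall z, closure S z -> closure S (h z).
Proof.
move=> hC SI hS z Sz B /=.
have Iz := closure_sub_I01 SI Sz.
move/subspace_continuousP: hC => /(_ z Iz) hC /hC; rewrite nbhs_simpl /= => hB.
have [s [Ss Bhs]] := Sz _ hB.
by exists (h s); split; [exact: hS | exact: Bhs (SI _ Ss)].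
Qed.

Lemma closure_orbits_notin (x : nat -> R) (u v : R) :
  meets_orbits_once f g u v -> (forall i, u < x i < v) ->
  {homo x : i j / (i < j)%N >-> i < j} ->
  forall k, ~ closure [set z | exists2 i, (i <= k)%N & orbit f g (x i) z] (x k.+1).
Proof.
move=> once xuv xlt k cl.
have nbx : nbhs (x k.+1) `](x k), v[%classic.
  apply: open_nbhs_nbhs; split; first exact: itv_open.
  by rewrite /= in_itv /= xlt //; case/andP: (xuv k.+1).
have [z [[i ik [m zm]]]] := cl _ nbx; rewrite /= in_itv /= => /andP[xkz zv].
have uz : u < z by apply: lt_trans xkz; case/andP: (xuv k).
have zx : z = x i.
  have [fonce gonce] := once _ m (xuv i).
  by case: zm => zm; rewrite zm; [apply: fonce | apply: gonce]; rewrite -zm uz zv.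
move: xkz ik; rewrite zx leq_eqVlt => xki /orP[/eqP ik|/xlt xik].
- by rewrite ik ltxx in xki.
- by rewrite ltNge (ltW xik) in xki.
Qed.

Hypotheses (fI : {homo f : x / x \in `[0, 1]}) (gI : {homo g : x / x \in `[0, 1]}).
Hypotheses (fC : {within I01 R, continuous f}) (gC : {within I01 R, continuous g}).

Lemma closed_inv_I01 : closed_inv f g (I01 R).
Proof.
split=> //; first by exists 0; rewrite /I01 /= in_itv /= lexx ler01.
- exact: closed_subspaceT.
- by apply: cyc_invariant_stable => z Iz; split; [exact: fI | exact: gI].
Qed.

Lemma closed_inv_closure (S : set R) :
  S !=set0 -> S `<=` I01 R -> (forall z, S z -> S (f z) /\ S (g z)) ->
  closed_inv f g (closure S).
Proof.
move=> [s Ss] SI fgS; split.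
- by exists s; exact: subset_closure.
- exact: closure_sub_I01.
- by apply: closed_subspaceW; exact: closed_closure.
- apply: cyc_invariant_stable => z Sz; split; apply: closure_stable => //.
  + by move=> w /fgS[].
  + by move=> w /fgS[].
Qed.

Lemma height_infinite_strict_chain (Z : nat -> set R) :
  (forall k, closed_inv f g (Z k)) -> (forall k, Z k `<` Z k.+1) ->
  height_infinite f g.
Proof.
move=> Zinv Zlt N; exists N; split=> //.
have ZI k : Z k `<=` I01 R by have [_ ?] := Zinv k.
exists (fun i => if (i < N)%N then Z i else I01 R); split.
- by move=> i _; case: ifP => _; [exact: Zinv | exact: closed_inv_I01].
- move=> i ->; case: ifP => _ //; have [Zsub nsubZ] := Zlt i.
  split=> [|IZ]; first exact: subset_trans Zsub (ZI _).
  by apply: nsubZ; apply: subset_trans IZ.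
- by rewrite ltnn.
Qed.

Hypotheses (gK : {in `[0, 1], cancel f g}) (fK : {in `[0, 1], cancel g f}).

Lemma orbit_I01 y : y \in `[0, 1] -> orbit f g y `<=` I01 R.
Proof. by move=> yI z [m [->|->]]; apply: iter_in. Qed.

Lemma orbit_stable y z : y \in `[0, 1] ->
  orbit f g y z -> orbit f g y (f z) /\ orbit f g y (g z).
Proof.
move=> yI [m [->|->]]; split.
- by exists m.+1; left.
- case: m => [|m]; first by exists 1%N; right.
  by exists m; left; rewrite /= gK //; apply: iter_in.
- case: m => [|m]; first by exists 1%N; left.
  by exists m; right; rewrite /= fK //; apply: iter_in.
- by exists m.+1; right.
Qed.

Lemma height_infinite_meets_orbits_once u v :
  u \in `[0, 1] -> v \in `[0, 1] -> u < v -> meets_orbits_once f g u v ->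
  height_infinite f g.
Proof.
move=> uI vI uv once.
pose x i := v - (v - u) * (i.+2%:R)^-1.
have xuv i : u < x i < v.
  have /andP[d0 d1] : 0 < (i.+2%:R : R)^-1 < 1.
    by rewrite invr_gt0 ltr0n invf_lt1 ?ltr0n ?ltr1n.
  by rewrite /x; move: (_^-1) d0 d1 => d d0 d1; apply/andP; split; nra.
have xlt : {homo x : i j / (i < j)%N >-> i < j}.
  move=> i j ij; rewrite /x ltrD2l ltrN2 ltr_pM2l ?subr_gt0 //.
  by rewrite ltf_pV2 ?posrE ?ltr0n // ltr_nat ltnS.
have xI i : x i \in `[0, 1].
  move: uI vI; rewrite !in_itv /= => /andP[u0 _] /andP[_ v1].
  by have /andP[? ?] := xuv i; apply/andP; split; lra.
pose Z k := closure [set z | exists2 i, (i <= k)%N & orbit f g (x i) z].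
apply: (@height_infinite_strict_chain Z) => k.
- apply: closed_inv_closure.
  + by exists (x 0%N); exists 0%N => //; exists 0%N; left.
  + by move=> z [i _ /orbit_I01]; apply.
  + by move=> z [i ik /(orbit_stable (xI i))[fz gz]]; split; exists i.
- split.
  + by apply: closureS => z [i ik oz]; exists i => //; exact: leqW.
  + move=> sub; apply: (closure_orbits_notin once xuv xlt (k := k)); apply: sub.
    by apply: subset_closure; exists k.+1 => //; exists 0%N; left.
Qed.

End ClosedInvariantSets.

Section FundamentalDomain.
Variables (R : realType) (p q : R -> R) (l r : R).
Hypotheses (pJ : {homo p : x / x \in `[l, r]}) (qJ : {homo q : x / x \in `[l, r]}).
Hypothesis pK : {in `[l, r], cancel p q}.
Hypotheses (pM : {in `[l, r] &, {homo p : x y / x <= y}})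
           (qM : {in `[l, r] &, {homo q : x y / x <= y}}).

Lemma meets_orbits_once_fundamental_domain a :
  a \in `[l, r] -> a < p a -> meets_orbits_once p q a (p a).
Proof.
move=> aJ apa y m /andP[ay ypa]; have paJ := pJ aJ.
have yJ : y \in `[l, r].
  move: aJ paJ; rewrite !in_itv /= => /andP[la _] /andP[_ par].
  by rewrite (le_trans la (ltW ay)) (le_trans (ltW ypa) par).
split.
- have a_le n : a <= iter n p y.
    elim: n => [|n IH] /=; first exact: ltW.
    exact: le_trans (ltW apa) (pM aJ (iter_in n pJ yJ) IH).
  case: m => [//|m] /= /andP[_ lt_pa].
  by have := pM aJ (iter_in m pJ yJ) (a_le m); rewrite leNgt lt_pa.
- have le_pa n : iter n q y <= p a.
    elim: n => [|n IH] /=; first exact: ltW.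
    apply: le_trans (ltW apa); rewrite -[X in _ <= X](pK aJ).
    exact: qM (iter_in n qJ yJ) paJ IH.
  case: m => [//|m] /= /andP[gt_a _].
  by have := qM (iter_in m qJ yJ) paJ (le_pa m); rewrite pK // leNgt gt_a.
Qed.

End FundamentalDomain.

Section IncreasingSelfMap.
Variables (R : realType) (p q : R -> R) (l r : R).
Hypotheses (pJ : {homo p : x / x \in `[l, r]}) (qJ : {homo q : x / x \in `[l, r]}).
Hypotheses (pK : {in `[l, r], cancel p q}) (qK : {in `[l, r], cancel q p}).
Hypotheses (pM : {in `[l, r] &, {homo p : x y / x <= y}})
           (qM : {in `[l, r] &, {homo q : x y / x <= y}}).

Lemma exists_meets_orbits_once_incr : l < r ->
  exists u v, [/\ u \in `[l, r], v \in `[l, r], u < v & meets_orbits_once p q u v].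
Proof.
move=> lr.
have [pid|/existsNP[a /not_implyP[aJ pa]]] :=
  pselect (forall y, y \in `[l, r] -> p y = y).
- exists l, r; split; rewrite ?in_itv /= ?lexx ?(ltW lr) //.
  move=> y m /andP[ly yr]; have yJ : y \in `[l, r] by rewrite in_itv /= !ltW.
  have qid : q y = y by rewrite -{1}(pid _ yJ) pK.
  by rewrite !iter_fix ?pid.
- have [apa|paa|/esym//] := ltgtP a (p a).
  + exists a, (p a); split=> //; first exact: pJ.
    exact: (meets_orbits_once_fundamental_domain pJ qJ pK pM qM aJ apa).
  + have aqa : a < q a.
      rewrite ltNge; apply/negP => qaa.
      by have := pM (qJ aJ) aJ qaa; rewrite qK // leNgt paa.
    exists a, (q a); split=> //; first exact: qJ.
    exact/meets_orbits_onceC/(meets_orbits_once_fundamental_domain qJ pJ qK qM pM aJ aqa).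
Qed.

End IncreasingSelfMap.

Lemma homeo_strict_monotonic (R : realType) (f g : R -> R) : homeo_pair f g ->
  {in `[0, 1] &, {homo f : x y / x < y}} /\ {in `[0, 1] &, {homo g : x y / x < y}} \/
  {in `[0, 1] &, {homo f : x y /~ x < y}} /\ {in `[0, 1] &, {homo g : x y /~ x < y}}.
Proof.
move=> [fI [gI [gK [fK [fC _]]]]].
have [finc|fdec] := itv_continuous_inj_mono fC (can_in_inj gK);
  [left|right]; split=> // x y xI yI xy.
- by rewrite ltNge -(le_mono_in finc (gI _ yI) (gI _ xI)) !fK // -ltNge.
- by rewrite ltNge -(le_nmono_in fdec (gI _ xI) (gI _ yI)) !fK // -ltNge.
Qed.

Lemma exists_fixed_point (R : realType) (h : R -> R) (a b : R) : a <= b ->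
  {homo h : x / x \in `[a, b]} -> {within `[a, b], continuous h} ->
  exists2 c, c \in `[a, b] & h c = c.
Proof.
move=> ab hJ hC.
have [c cJ hc] : exists2 c, c \in `[a, b] & h c - c = 0.
  apply: IVT => //.
  - apply/subspace_continuousP => x xJ; apply: cvgB; last exact: cvg_within.
    by move/subspace_continuousP: hC; apply.
  - have := hJ a; have := hJ b; rewrite !in_itv /= !lexx ab /=.
    move=> /(_ isT) /andP[? ?] /(_ isT) /andP[? ?].
    by rewrite ge_min le_max; apply/andP; split; apply/orP; [right|left]; lra.
by exists c => //; lra.
Qed.

Lemma decr_square_homo_le (R : realType) (h : R -> R) (D : {pred R}) :
  {homo h : x / x \in D} -> {in D &, {homo h : x y /~ x < y}} ->
  {in D &, {homo h \o h : x y / x <= y}}.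
Proof.
move=> hD hM x y xD yD; rewrite le_eqVlt => /predU1P[->//|xy].
exact: ltW (hM _ _ (hD _ xD) (hD _ yD) (hM _ _ yD xD xy)).
Qed.

Lemma decr_square_below (R : realType) (h : R -> R) (c : R) :
  {homo h : x / x \in `[0, 1]} -> {in `[0, 1] &, {homo h : x y /~ x < y}} ->
  c \in `[0, 1] -> h c = c -> {homo h \o h : x / x \in `[0, c]}.
Proof.
move=> hI hD cI hc z; rewrite !in_itv /= => /andP[z0 zc].
have zI : z \in `[0, 1].
  by move: cI; rewrite !in_itv /= z0 => /andP[_ c1]; exact: le_trans zc c1.
have := decr_square_homo_le hI hD zI cI zc; rewrite /= !hc => ->.
by move: (hI _ (hI _ zI)); rewrite in_itv /= => /andP[-> _].
Qed.

Section DecreasingSelfMap.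
Variables (R : realType) (f g : R -> R) (c : R).
Hypotheses (fI : {homo f : x / x \in `[0, 1]}) (gI : {homo g : x / x \in `[0, 1]}).
Hypotheses (fD : {in `[0, 1] &, {homo f : x y /~ x < y}})
           (gD : {in `[0, 1] &, {homo g : x y /~ x < y}}).
Hypotheses (cI : c \in `[0, 1]) (fc : f c = c) (gc : g c = c).

Lemma iter_decr_alternates (h : R -> R) :
  {homo h : x / x \in `[0, 1]} -> {in `[0, 1] &, {homo h : x y /~ x < y}} ->
  h c = c -> forall m y, y \in `[0, 1] -> y < c ->
  if odd m then c < iter m h y else iter m h y < c.
Proof.
move=> hI hD hc m y yI yc; elim: m => [//|m IH] /=.
have zI := iter_in m hI yI.
case: (odd m) IH => /= IH; [rewrite -[X in _ < X]hc | rewrite -[X in X < _]hc].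
- exact: hD.
- exact: hD.
Qed.

Lemma meets_orbits_once_square (u v : R) : 0 <= u -> v <= c ->
  meets_orbits_once (f \o f) (g \o g) u v -> meets_orbits_once f g u v.
Proof.
move=> u0 vc once y m yuv; have /andP[uy yv] := yuv.
have yc : y < c by exact: lt_le_trans vc.
have yI : y \in `[0, 1].
  by move: cI; rewrite !in_itv /= => /andP[_ c1]; apply/andP; split; lra.
have even_step (h : R -> R) : {homo h : x / x \in `[0, 1]} ->
    {in `[0, 1] &, {homo h : x y /~ x < y}} -> h c = c ->
    (u < iter m./2 (h \o h) y < v -> iter m./2 (h \o h) y = y) ->
    u < iter m h y < v -> iter m h y = y.
  move=> hI hD hc once2; have := iter_decr_alternates hI hD hc m yI yc.
  move: (odd_double_half m); case: (odd m) => /= mE side.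
  - by move=> /andP[_ ?]; lra.
  - by rewrite -mE -muln2 iterM; exact: once2.
have [fonce gonce] := once y m./2 yuv.
by split; apply: even_step.
Qed.

End DecreasingSelfMap.

Lemma exists_meets_orbits_once_decr (R : realType) (f g : R -> R) :
  {homo f : x / x \in `[0, 1]} -> {homo g : x / x \in `[0, 1]} ->
  {in `[0, 1], cancel f g} -> {in `[0, 1], cancel g f} ->
  {within `[0, 1], continuous f} ->
  {in `[0, 1] &, {homo f : x y /~ x < y}} -> {in `[0, 1] &, {homo g : x y /~ x < y}} ->
  exists u v, [/\ u \in `[0, 1], v \in `[0, 1], u < v & meets_orbits_once f g u v].
Proof.
move=> fI gI gK fK fC fD gD.
have [c cI fc] := exists_fixed_point ler01 fI fC.
have gc : g c = c by rewrite -{1}fc gK.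
have I0 : (0 : R) \in `[0, 1] by rewrite in_itv /= lexx ler01.
have I1 : (1 : R) \in `[0, 1] by rewrite in_itv /= lexx ler01.
have c_gt0 : 0 < c.
  have f0_gt0 : 0 < f 0.
    move: (fI _ I1); rewrite in_itv /= => /andP[f1 _].
    exact: le_lt_trans f1 (fD _ _ I1 I0 ltr01).
  move: (cI); rewrite in_itv /= le_eqVlt => /andP[/predU1P[c0|//] _].
  by move: f0_gt0; rewrite c0 fc ltxx.
have sub : {subset `[0, c] <= `[0, 1]}.
  move=> x; move: cI; rewrite !in_itv /= => /andP[_ c1] /andP[-> xc].
  exact: le_trans xc c1.
have sqK (h k : R -> R) : {homo h : x / x \in `[0, 1]} -> {in `[0, 1], cancel h k} ->
    {in `[0, c], cancel (h \o h) (k \o k)}.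
  by move=> hI hK z /sub zI /=; rewrite !hK ?hI.
have [u [v [uJ vJ uv once]]] := exists_meets_orbits_once_incr (decr_square_below fI fD cI fc)
  (decr_square_below gI gD cI gc) (sqK _ _ fI gK) (sqK _ _ gI fK)
  (sub_in2 sub (decr_square_homo_le fI fD)) (sub_in2 sub (decr_square_homo_le gI gD)) c_gt0.
exists u, v; split; [exact: sub | exact: sub | exact: uv |].
move: uJ vJ; rewrite !in_itv /= => /andP[u0 _] /andP[_ vc].
exact: (meets_orbits_once_square fI gI fD gD cI fc gc u0 vc once).
Qed.

Theorem theorem2p4 (R : realType) (f g : R -> R) :
  homeo_pair f g -> height_infinite f g.
Proof.
move=> fg; have [fI [gI [gK [fK [fC gC]]]]] := fg.
suff [u [v [uI vI uv once]]] : exists u v,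
    [/\ u \in `[0, 1], v \in `[0, 1], u < v & meets_orbits_once f g u v].
  exact: (height_infinite_meets_orbits_once fI gI fC gC gK fK uI vI uv once).
have [[finc ginc]|[fdec gdec]] := homeo_strict_monotonic fg.
- exact: (exists_meets_orbits_once_incr fI gI gK fK (ltW_homo_in finc) (ltW_homo_in ginc) ltr01).
- exact: (exists_meets_orbits_once_decr fI gI gK fK fC fdec gdec).
Qed.
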